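(* Let $\mathbb X,\mathbb Y$ be Euclidean spaces, $g\colon\mathbb X\to\mathbb Y$ twice continuously differentiable, $D\subset\mathbb Y$ closed, $\Phi(x):=g(x)-D$, $(\bar x,0)\in\operatorname{gph}\Phi$, $u\in\mathbb S_{\mathbb X}$. Assume FOSCMS$(u)$: for all $y^*$, [$\nabla g(\bar x)^*y^*=0$, $y^*\in\mathcal N_D(g(\bar x);\nabla g(\bar x)u)$] implies $y^*=0$. Then all of the following hold: (Q1) for all $y^*,z^*$: [$\nabla g(\bar x)^*y^*=0$, $\nabla^2\langle y^*,g\rangle(\bar x)(u)+\nabla g(\bar x)^*z^*=0$, $y^*\in\mathcal N_D(g(\bar x);\nabla g(\bar x)u)$, $z^*\in D\mathcal N_D(g(\bar x),y^* )(\nabla g(\bar x)u)$] implies $y^*=0$; either (Q2): for all $y^*,\hat z^*$: [$\nabla g(\bar x)^*y^*=0$, $\nabla g(\bar x)^*\hat z^*=0$, $y^*\in\mathcal N_D(g(\bar x);\nabla g(\bar x)u)$, $\hat z^*\in D\mathcal N_D(g(\bar x),y^* )(0)$] implies $\hat z^*=0$, or (Q3): $\nabla g(\bar x)u\ne0$ and for all $y^*,\hat z^*$: [$\nabla g(\bar x)^*y^*=0$, $\nabla g(\bar x)^*\hat z^*=0$, $y^*\in\mathcal N_D(g(\bar x);\nabla g(\bar x)u)$] implies $\hat z^*\notin D_{\mathrm{sub}}\mathcal N_D(g(\bar x),y^* )(\nabla g(\bar x)u/\|\nabla g(\bar x)u\|)$; and for each $x^*\in\mathbb X$ and $y^*,z^*\in\mathbb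 Y$ with $x^*=\nabla^2\langle y^*,g\rangle(\bar x)(u)+\nabla g(\bar x)^*z^*$, $y^*\in\mathcal N_D(g(\bar x);\nabla g(\bar x)u)\cap\ker\nabla g(\bar x)^*$, $z^*\in D\mathcal N_D(g(\bar x),y^* )(\nabla g(\bar x)u)$, there is $\lambda\in\mathcal N_D(g(\bar x))$ with $x^*=\nabla g(\bar x)^*\lambda$.
   Context: $\nabla^2\langle y^*,g\rangle(\bar x)(u)$ is the Hessian of $x\mapsto\langle y^*,g(x)\rangle$ applied to $u$. $\mathcal N_D$ is the limiting normal cone; $\mathcal N_D(y;w)$ the directional limiting normal cone (all $\eta$ with $w_k\to w$, $t_k\downarrow0$, $\eta_k\to\eta$, $\eta_k\in\widehat{\mathcal N}_D(y+t_kw_k)$, $\widehat{\mathcal N}$ regular normal cone). $D\mathcal N_D(\bar y,\bar y^* )$ is the graphical derivative of the normal cone mapping (graph $=\mathcal T_{\operatorname{gph}\mathcal N_D}(\bar y,\bar y^* )$); $D_{\mathrm{sub}}\mathcal N_D(\bar y,\bar y^* )(w)$, $w\in\mathbb S_{\mathbb Y}$, is the set of $q\in\mathbb S_{\mathbb Y}$ with $w_k\to w$, $q_k\to q$, $t_k,\tau_k\downarrow0$, $\tau_k/t_k\to\infty$ and $\bar y^*+\tau_kq_k\in\mathcal N_D(\bar y+t_kw_k)$. *)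

From HB Require Import structures.
From mathcomp Require Import all_boot all_order all_algebra.
From mathcomp Require Import all_classical all_reals all_analysis.
Set Implicit Arguments. Unset Strict Implicit. Unset Printing Implicit Defensive.
Import Order.TTheory GRing.Theory Num.Theory.
Import numFieldNormedType.Exports.
Local Open Scope classical_set_scope.
Local Open Scope ring_scope.

Section Defs.
Variable R : realType.

Definition dot (k : nat) (a b : 'rV[R]_k) : R := (a *m b^T) 0 0.
Definition enorm (k : nat) (a : 'rV[R]_k) : R := Num.sqrt (dot a a).

Definition C2 (n m : nat) (g : 'rV[R]_n -> 'rV[R]_m) : Prop :=
  (forall x, differentiable g x) /\
  (forall (v x : 'rV[R]_n), differentiable (fun z => 'd g z v) x) /\
  (forall (v w : 'rV[R]_n),
      continuous (fun z => 'd (fun z' => 'd g z' v) z w)).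

(* <grad^2 <y*, g>(xbar)(u), w> : second derivative of x |-> <y*, g x> *)
Definition hess_pair (n m : nat) (g : 'rV[R]_n -> 'rV[R]_m) (ys : 'rV[R]_m)
    (xbar u w : 'rV[R]_n) : R :=
  'd (fun x => 'd (fun x' => (dot ys (g x') : R^o)) x u) xbar w.

(* regular (Frechet) normal cone; empty outside D *)
Definition rnormal (m : nat) (D : set 'rV[R]_m) (y eta : 'rV[R]_m) : Prop :=
  D y /\ forall e : R, 0 < e -> exists2 d : R, 0 < d &
    forall y', D y' -> enorm (y' - y) < d -> dot eta (y' - y) <= e * enorm (y' - y).

Definition lnormal (m : nat) (D : set 'rV[R]_m) (y eta : 'rV[R]_m) : Prop :=
  exists (yk etak : nat -> 'rV[R]_m),
    [/\ yk @ \oo --> y, etak @ \oo --> eta & forall k, rnormal D (yk k) (etak k)].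

Definition dnormal (m : nat) (D : set 'rV[R]_m) (y w eta : 'rV[R]_m) : Prop :=
  exists (tk : nat -> R) (wk etak : nat -> 'rV[R]_m),
    [/\ (forall k, 0 < tk k), tk @ \oo --> 0, wk @ \oo --> w,
        etak @ \oo --> eta & forall k, rnormal D (y + tk k *: wk k) (etak k)].

(* graphical derivative DN_D(y, ys)(w): z with (w,z) in the tangent cone to
   gph N_D at (y, ys) *)
Definition gderN (m : nat) (D : set 'rV[R]_m) (y ys w z : 'rV[R]_m) : Prop :=
  exists (tk : nat -> R) (wk zk : nat -> 'rV[R]_m),
    [/\ (forall k, 0 < tk k), tk @ \oo --> 0, wk @ \oo --> w,
        zk @ \oo --> z & forall k, lnormal D (y + tk k *: wk k) (ys + tk k *: zk k)].

(* D_sub N_D(y, ys)(w) (meaningful for w in the unit sphere) *)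
Definition subderN (m : nat) (D : set 'rV[R]_m) (y ys w q : 'rV[R]_m) : Prop :=
  enorm q = 1 /\
  exists (tk tauk : nat -> R) (wk qk : nat -> 'rV[R]_m),
    [/\ (forall k, 0 < tk k) /\ (forall k, 0 < tauk k),
        tk @ \oo --> 0 /\ tauk @ \oo --> 0,
        (fun k => tauk k / tk k) @ \oo --> +oo,
        wk @ \oo --> w /\ qk @ \oo --> q
      & forall k, lnormal D (y + tk k *: wk k) (ys + tauk k *: qk k)].

End Defs.

From HB Require Import structures.
From mathcomp Require Import all_boot all_order all_algebra.
From mathcomp Require Import all_classical all_reals all_analysis.
Import Order.TTheory GRing.Theory Num.Theory.
Import numFieldNormedType.Exports.
Local Open Scope classical_set_scope.
Local Open Scope ring_scope.

(* Every multiplier y* occurring in the conclusions lies in ker grad g(xbar)^*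
   and in N_D(g xbar; grad g(xbar) u), so FOSCMS(u) forces y* = 0.  At the
   multiplier 0, both DN_D(y, 0)(w) and D_sub N_D(y, 0)(w) consist of limits
   of directions z_k such that s_k z_k is a limiting normal at y + t_k w_k,
   with t_k -> 0 and s_k > 0.  Approximating these by regular normals, which
   form a cone, places the limit z in N_D(y; w), and N_D(y; .) is invariant
   under positive scaling of the direction.  So FOSCMS(u) applies to z too,
   giving (Q2) or (Q3), and z is the multiplier required in the last claim. *)

Section NormalConeCalculus.
Variable R : realType.
Set Implicit Arguments.
Unset Strict Implicit.

Section Rescaling.
Variable V : normedModType R.

Lemma dist_scale_inv (t : R) (a b : V) : 0 < t ->
  `|a - t^-1 *: b| = t^-1 * `|t *: a - b|.
Proof.
move=> t_gt0; rewrite -[t^-1 in RHS]gtr0_norm ?invr_gt0 // -normrZ.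
by rewrite scalerBr scalerA mulVf ?gt_eqF // scale1r.
Qed.

Lemma cvg_dist_natSinv (a : nat -> V) (l : V) :
  (forall k, `|l - a k| < k.+1%:R^-1) -> a @ \oo --> l.
Proof.
move=> a_near; apply/cvgrPdist_lt => e e_gt0; near=> k.
apply: lt_trans (a_near k) _; near: k; exact: (near_infty_natSinv_lt (PosNum e_gt0)).
Unshelve. all: by end_near.
Qed.

End Rescaling.

Section FixedDimension.
Variable m : nat.
Implicit Types (D : set 'rV[R]_m) (y w eta : 'rV[R]_m).

Lemma dotZl k (t : R) (a b : 'rV[R]_k) : dot (t *: a) b = t * dot a b.
Proof. by rewrite /dot -scalemxAl mxE. Qed.

Lemma dot0l k (b : 'rV[R]_k) : dot 0 b = 0.
Proof. by rewrite /dot mul0mx mxE. Qed.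

Lemma dot_sqr_sum (w : 'rV[R]_m) : dot w w = \sum_j w 0 j ^+ 2.
Proof. by rewrite /dot mxE; apply: eq_bigr => j _; rewrite mxE expr2. Qed.

Lemma enorm0 : enorm (0 : 'rV[R]_m) = 0.
Proof. by rewrite /enorm dot0l sqrtr0. Qed.

Lemma enorm_gt0 w : w != 0 -> 0 < enorm w.
Proof.
move=> w_neq0; rewrite /enorm sqrtr_gt0 dot_sqr_sum lt_def.
rewrite sumr_ge0 ?andbT => [|j _]; last exact: sqr_ge0.
apply: contra w_neq0 => /eqP sum_eq0; apply/eqP/matrixP => i j.
rewrite (ord1 i) mxE.
have /eqP := @psumr_eq0P _ _ _ _ (fun l _ => sqr_ge0 (w 0 l)) sum_eq0 j isT.
by rewrite sqrf_eq0 => /eqP.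
Qed.

Lemma rnormal_scale D y eta (t : R) :
  0 < t -> rnormal D y (t *: eta) -> rnormal D y eta.
Proof.
move=> t_gt0 [Dy t_eta]; split=> // e e_gt0.
have [d d_gt0 near_y] := t_eta (t * e) (mulr_gt0 t_gt0 e_gt0).
exists d => // y' Dy' y'y; have := near_y y' Dy' y'y.
by rewrite dotZl -mulrA ler_pM2l.
Qed.

Lemma lnormal_approx D y eta : lnormal D y eta -> forall e : R, 0 < e ->
  exists y' eta', [/\ `|y - y'| < e, `|eta - eta'| < e & rnormal D y' eta'].
Proof.
case=> yk [etak [yk_cvg etak_cvg rnormal_k]] e e_gt0.
have [k [yk_near etak_near]] : exists k, `|y - yk k| < e /\ `|eta - etak k| < e.
  apply: (@filter_ex _ \oo); near=> k; split; near: k.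
  - exact: cvgr_dist_lt yk_cvg _ e_gt0.
  - exact: cvgr_dist_lt etak_cvg _ e_gt0.
by exists (yk k), (etak k).
Unshelve. all: by end_near.
Qed.

Lemma dnormal_approx D y w eta :
  (forall e : R, 0 < e -> exists t w' eta',
     [/\ 0 < t < e, `|w - w'| < e, `|eta - eta'| < e & rnormal D (y + t *: w') eta']) ->
  dnormal D y w eta.
Proof.
move=> approx.
have approx_k (k : nat) : exists p : R * ('rV[R]_m * 'rV[R]_m),
    [/\ 0 < p.1 < k.+1%:R^-1, `|w - p.2.1| < k.+1%:R^-1,
        `|eta - p.2.2| < k.+1%:R^-1 & rnormal D (y + p.1 *: p.2.1) p.2.2].
  have [t [w' [eta' [? ? ? ?]]]] := approx k.+1%:R^-1 ltac:(by rewrite invr_gt0).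
  by exists (t, (w', eta')).
have [p p_k] := choice approx_k.
exists (fun k => (p k).1), (fun k => (p k).2.1), (fun k => (p k).2.2); split.
- by move=> k; have [/andP[]] := p_k k.
- apply: cvg_dist_natSinv => k; have [/andP[t_gt0 t_lt] _ _ _] := p_k k.
  by rewrite sub0r normrN gtr0_norm.
- by apply: cvg_dist_natSinv => k; have [] := p_k k.
- by apply: cvg_dist_natSinv => k; have [] := p_k k.
- by move=> k; have [] := p_k k.
Qed.

Lemma dnormal_lnormal D y w eta : dnormal D y w eta -> lnormal D y eta.
Proof.
case=> tk [wk [etak [_ tk_cvg wk_cvg etak_cvg rnormal_k]]].
exists (fun k => y + tk k *: wk k), etak; split => //.
have := cvgD (cvg_cst y) (cvgZ tk_cvg wk_cvg); rewrite scale0r addr0; exact.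
Qed.

Lemma dnormal_lnormal_seq D y w q (tk sk : nat -> R) (wk qk : nat -> 'rV[R]_m) :
  (forall k, 0 < tk k) -> (forall k, 0 < sk k) -> tk @ \oo --> 0 ->
  wk @ \oo --> w -> qk @ \oo --> q ->
  (forall k, lnormal D (y + tk k *: wk k) (sk k *: qk k)) -> dnormal D y w q.
Proof.
move=> tk_gt0 sk_gt0 tk_cvg wk_cvg qk_cvg lnormal_k; apply: dnormal_approx => e e_gt0.
have e2_gt0 : 0 < e / 2 by rewrite divr_gt0.
have [k [tk_lt [wk_near qk_near]]] :
    exists k, `|0 - tk k| < e /\ `|w - wk k| < e / 2 /\ `|q - qk k| < e / 2.
  apply: (@filter_ex _ \oo); near=> k; split; [|split]; near: k.
  - exact: cvgr_dist_lt tk_cvg _ e_gt0.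
  - exact: cvgr_dist_lt wk_cvg _ e2_gt0.
  - exact: cvgr_dist_lt qk_cvg _ e2_gt0.
set t := tk k; set s := sk k.
have t_gt0 : 0 < t := tk_gt0 k; have s_gt0 : 0 < s := sk_gt0 k.
(* Dividing the errors of the approximation by [t] and [s] leaves [e / 2]. *)
have d_gt0 : 0 < Num.min (t * (e / 2)) (s * (e / 2)) by rewrite lt_min !mulr_gt0.
have [y' [eta' [+ + rnormal']]] := lnormal_approx (lnormal_k k) d_gt0.
rewrite !lt_min => /andP[y'_near _] /andP[_ eta'_near].
have half_step (a b : 'rV[R]_m) (r : R) (c : 'rV[R]_m) : 0 < r ->
    `|a - b| < e / 2 -> `|r *: b - c| < r * (e / 2) -> `|a - r^-1 *: c| < e.
  move=> r_gt0 ab bc; apply: le_lt_trans (ler_distD b _ _) _.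
  by rewrite [e]splitr ltrD // dist_scale_inv // mulrC ltr_pdivrMr // mulrC.
exists t, (t^-1 *: (y' - y)), (s^-1 *: eta'); split.
- by rewrite t_gt0; move: tk_lt; rewrite sub0r normrN gtr0_norm.
- by apply: half_step wk_near _; rewrite // opprB addrA [t *: _ + y]addrC.
- exact: half_step qk_near eta'_near.
- rewrite scalerA mulfV ?gt_eqF // scale1r addrC subrK.
  by apply: (rnormal_scale s_gt0); rewrite scalerA mulfV ?gt_eqF // scale1r.
Unshelve. all: by end_near.
Qed.

Lemma gderN0_dnormal D y w z : gderN D y 0 w z -> dnormal D y w z.
Proof.
case=> tk [wk [zk [tk_gt0 tk_cvg wk_cvg zk_cvg lnormal_k]]].
apply: (dnormal_lnormal_seq tk_gt0 tk_gt0 tk_cvg wk_cvg zk_cvg) => k.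
by rewrite -[_ *: zk k]add0r.
Qed.

Lemma subderN0_dnormal D y w q : subderN D y 0 w q -> dnormal D y w q.
Proof.
case=> _ [tk [sk [wk [qk [[tk_gt0 sk_gt0] [tk_cvg _] _ [wk_cvg qk_cvg] lnormal_k]]]]].
apply: (dnormal_lnormal_seq tk_gt0 sk_gt0 tk_cvg wk_cvg qk_cvg) => k.
by rewrite -[_ *: qk k]add0r.
Qed.

Lemma dnormalZ D y w eta (c : R) : 0 < c -> dnormal D y w eta -> dnormal D y (c *: w) eta.
Proof.
move=> c_gt0 [tk [wk [etak [tk_gt0 tk_cvg wk_cvg etak_cvg rnormal_k]]]].
exists (fun k => tk k / c), (fun k => c *: wk k), etak; split => //.
- by move=> k; rewrite divr_gt0.
- by have := cvgM tk_cvg (cvg_cst c^-1); rewrite mul0r; exact.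
- exact: cvgZ (cvg_cst c) wk_cvg.
- by move=> k; rewrite scalerA mulfVK ?gt_eqF.
Qed.

End FixedDimension.

Lemma hess_pair0 (n m : nat) (g : 'rV[R]_n -> 'rV[R]_m) (xbar u w : 'rV[R]_n) :
  hess_pair g 0 xbar u w = 0.
Proof.
have dot0g : (fun x' => (dot 0 (g x') : R^o)) = cst 0 by apply: funext => x'; rewrite dot0l.
rewrite /hess_pair dot0g.
have -> : (fun x => 'd (cst (0 : R^o)) x u) = cst 0 by apply: funext => x; rewrite diff_cst.
by rewrite diff_cst.
Qed.

End NormalConeCalculus.

Theorem proposition5p20 (R : realType) (n m : nat)
  (g : 'rV[R]_n -> 'rV[R]_m) (D : set 'rV[R]_m) (xbar u : 'rV[R]_n) :
  C2 g -> closed D -> D (g xbar) -> enorm u = 1 ->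
  (* FOSCMS(u) *)
  (forall ys : 'rV[R]_m,
     (forall w, dot ys ('d g xbar w) = 0) ->
     dnormal D (g xbar) ('d g xbar u) ys -> ys = 0) ->
  (* (Q1) *)
  (forall ys zs : 'rV[R]_m,
     (forall w, dot ys ('d g xbar w) = 0) ->
     (forall w, hess_pair g ys xbar u w + dot zs ('d g xbar w) = 0) ->
     dnormal D (g xbar) ('d g xbar u) ys ->
     gderN D (g xbar) ys ('d g xbar u) zs -> ys = 0)
  /\
  ( (* (Q2) *)
    (forall ys zh : 'rV[R]_m,
       (forall w, dot ys ('d g xbar w) = 0) ->
       (forall w, dot zh ('d g xbar w) = 0) ->
       dnormal D (g xbar) ('d g xbar u) ys ->
       gderN D (g xbar) ys 0 zh -> zh = 0)
    \/
    (* (Q3) *)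
    ('d g xbar u <> 0 /\
     forall ys zh : 'rV[R]_m,
       (forall w, dot ys ('d g xbar w) = 0) ->
       (forall w, dot zh ('d g xbar w) = 0) ->
       dnormal D (g xbar) ('d g xbar u) ys ->
       ~ subderN D (g xbar) ys ((enorm ('d g xbar u))^-1 *: 'd g xbar u) zh))
  /\
  (forall (xs : 'rV[R]_n) (ys zs : 'rV[R]_m),
     (forall w, dot xs w = hess_pair g ys xbar u w + dot zs ('d g xbar w)) ->
     dnormal D (g xbar) ('d g xbar u) ys ->
     (forall w, dot ys ('d g xbar w) = 0) ->
     gderN D (g xbar) ys ('d g xbar u) zs ->
     exists lam : 'rV[R]_m,
       lnormal D (g xbar) lam /\ forall w, dot xs w = dot lam ('d g xbar w)).
Proof.
move=> _ _ _ _; set v := 'd g xbar u => foscms.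
split; first by move=> ys zs ker_ys _ /(foscms _ ker_ys).
split.
- have [v0|v_neq0] := eqVneq v 0.
  + left=> ys zh ker_ys ker_zh /(foscms _ ker_ys) -> /gderN0_dnormal zh_dir.
    by apply: foscms ker_zh _; rewrite v0.
  + right; split=> [|ys zh ker_ys ker_zh /(foscms _ ker_ys) -> zh_sub]; first exact/eqP.
    have v_gt0 := enorm_gt0 v_neq0.
    have := dnormalZ v_gt0 (subderN0_dnormal zh_sub).
    rewrite scalerA mulfV ?gt_eqF // scale1r => /(foscms _ ker_zh) zh0.
    by case: zh_sub; rewrite zh0 enorm0 => /esym/eqP; rewrite oner_eq0.
- move=> xs ys zs + ys_dir ker_ys; rewrite (foscms _ ker_ys ys_dir).
  move=> xs_eq /gderN0_dnormal zs_dir.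
  exists zs; split; first exact: dnormal_lnormal zs_dir.
  by move=> w; rewrite xs_eq hess_pair0 add0r.
Qed.
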